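(* Consider an instance of the bicriteria asymmetric traveling salesman problem (bi-ATSP) with tour set $\mathcal{C}$, vector criterion $D=(D_1,D_2)$, outcome set $\mathcal{D}=D(\mathcal{C})$, and $\mathcal{D}_i=D_i(\mathcal{C})$ for $i=1,2$. Suppose that $$P(\mathcal{D}) = \{ (y_1, y_2): y_2 = a - k y_1,\ y_1 \in \mathcal{D}_1,\ y_2 \in \mathcal{D}_2 \},$$ where $a>0$ and $k>0$ are constants. Suppose the 2nd criterion $D_2$ is more important than the 1st criterion $D_1$ with coefficient of relative importance $\theta''\in(0,1)$, and let $\hat{P}(\mathcal{D})$ be the corresponding reduced Pareto set (reduction with $i=2$, $j=1$, $\theta=\theta''$). If $\theta'' \geqslant 1/(k+1)$, then $\hat{P}(\mathcal{D})$ consists of exactly one element. If $\theta'' < 1/(k+1)$, then $\hat{P}(\mathcal{D}) = P(\mathcal{D})$.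
   Context: Bi-ATSP: given a complete directed graph $G=(V,E)$ on $n$ vertices, each arc $e\in E$ carries a weight vector $d(e)=(d_1(e),d_2(e))$ of positive numbers. $\mathcal{C}$ is the set of all $(n-1)!$ Hamiltonian circuits (tours) of $G$, and for a tour $C$, $D(C)=(D_1(C),D_2(C))$ with $D_j(C)=\sum_{e\in C} d_j(e)$. For vectors $y^*,y$, write $y^*\leq y$ if $y^*\neq y$ and $y^*_s\leqslant y_s$ for every coordinate $s$ (Pareto relation). For a vector criterion $F$ on $\mathcal{C}$, the set of pareto-optimal tours is $P_F(\mathcal{C})=\{C\in\mathcal{C}: \nexists C^*\in\mathcal{C},\ F(C^* )\leq F(C)\}$. The Pareto set is $P(\mathcal{D})=\{y\in\mathcal{D}: \nexists y^*\in\mathcal{D},\ y^*\leq y\}$. Reduced Pareto set: if criterion $D_i$ is declared more important than criterion $D_j$ ($\{i,j\}=\{1,2\}$) with coefficient of relative importance $\theta\in(0,1)$, define the new criterion $\hat D$ by $\hat D_j=\theta D_i+(1-\theta)D_j$ and $\hat D_i=D_i$, and set $\hat{P}(\mathcal{D})=D(P_{\hat D}(\mathcal{C}))$ (a subset of $P(\mathcal{D})$). *)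

From HB Require Import structures.
From mathcomp Require Import all_boot all_order all_algebra all_fingroup.
Set Implicit Arguments. Unset Strict Implicit. Unset Printing Implicit Defensive.
Import Order.TTheory GRing.Theory Num.Theory.
Local Open Scope ring_scope.

(* A Hamiltonian circuit (tour) is encoded by its successor permutation
   s : {perm 'I_n} which is a single n-cycle (the orbit of every vertex is
   the whole vertex set); its arcs are (i, s i), i : 'I_n. *)
Definition is_tour (n : nat) (s : {perm 'I_n}) : Prop :=
  forall x : 'I_n, porbit s x = [set: 'I_n].

Definition tour_weight (R : realFieldType) (n : nat)
  (dj : 'I_n -> 'I_n -> R) (s : {perm 'I_n}) : R :=
  \sum_(i < n) dj i (s i).

Definition Dvec (R : realFieldType) (n : nat) (d1 d2 : 'I_n -> 'I_n -> R)
  (s : {perm 'I_n}) : R * R :=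
  (tour_weight d1 s, tour_weight d2 s).

Definition pareto_le (R : realFieldType) (ys y : R * R) : Prop :=
  ys <> y /\ ys.1 <= y.1 /\ ys.2 <= y.2.

Definition outcomes (R : realFieldType) (n : nat) (d1 d2 : 'I_n -> 'I_n -> R)
  (y : R * R) : Prop :=
  exists s : {perm 'I_n}, is_tour s /\ Dvec d1 d2 s = y.

Definition outcomes1 (R : realFieldType) (n : nat) (d1 d2 : 'I_n -> 'I_n -> R)
  (t : R) : Prop := exists s : {perm 'I_n}, is_tour s /\ tour_weight d1 s = t.
Definition outcomes2 (R : realFieldType) (n : nat) (d1 d2 : 'I_n -> 'I_n -> R)
  (t : R) : Prop := exists s : {perm 'I_n}, is_tour s /\ tour_weight d2 s = t.

Definition pareto_set (R : realFieldType) (n : nat) (d1 d2 : 'I_n -> 'I_n -> R)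
  (y : R * R) : Prop :=
  outcomes d1 d2 y /\ ~ (exists ys, outcomes d1 d2 ys /\ pareto_le ys y).

Definition pareto_tours (R : realFieldType) (n : nat)
  (F : {perm 'I_n} -> R * R) (s : {perm 'I_n}) : Prop :=
  is_tour s /\ ~ (exists s', is_tour s' /\ pareto_le (F s') (F s)).

Definition Dhat21 (R : realFieldType) (n : nat) (d1 d2 : 'I_n -> 'I_n -> R)
  (theta : R) (s : {perm 'I_n}) : R * R :=
  (theta * tour_weight d2 s + (1 - theta) * tour_weight d1 s, tour_weight d2 s).

Definition reduced_pareto21 (R : realFieldType) (n : nat)
  (d1 d2 : 'I_n -> 'I_n -> R) (theta : R) (y : R * R) : Prop :=
  exists s : {perm 'I_n}, pareto_tours (Dhat21 d1 d2 theta) s /\ Dvec d1 d2 s = y.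

From HB Require Import structures.
From mathcomp Require Import all_boot all_order all_algebra all_fingroup.
From mathcomp Require Import ring lra.
Set Implicit Arguments. Unset Strict Implicit. Unset Printing Implicit Defensive.
Import Order.TTheory GRing.Theory Num.Theory.
Local Open Scope ring_scope.

(* Reducing by "D_2 more important than D_1" replaces each outcome y by
   hat y = (theta y_2 + (1 - theta) y_1, y_2); this map preserves the Pareto
   relation, so the reduced set lies in P(D).  For two outcomes u, y on the
   line y_2 = a - k y_1 one has
     (hat u)_1 - (hat y)_1 = (u_1 - y_1) (1 - theta (k + 1)).
   If theta (k + 1) >= 1, moving along the line towards smaller D_2 never
   increases (hat y)_1, so the Pareto point of minimal D_2 dominates every
   other one after the reduction.  If theta (k + 1) < 1, hat reverses the
   order along the line in its first coordinate, so no two Pareto points are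
   comparable after the reduction, and no reduced tour can beat a Pareto one
   (compare with a Pareto point below the competitor). *)

Section Pareto.
Variable R : realFieldType.

Lemma pareto_le_sum_lt (x y : R * R) : pareto_le x y -> x.1 + x.2 < y.1 + y.2.
Proof.
case: x y => [x1 x2] [y1 y2] [ne /= [le1 le2]].
have [lt1|e1] := ltP x1 y1; first lra.
have [lt2|e2] := ltP x2 y2; first lra.
by case: ne; congr pair; apply/eqP; rewrite eq_le ?le1 ?le2.
Qed.

Variable theta : R.

Definition hat21 (y : R * R) : R * R := (theta * y.2 + (1 - theta) * y.1, y.2).

Lemma Dhat21E n (d1 d2 : 'I_n -> 'I_n -> R) (s : {perm 'I_n}) :
  Dhat21 d1 d2 theta s = hat21 (Dvec d1 d2 s).
Proof. by []. Qed.

Hypotheses (theta_ge0 : 0 <= theta) (theta_lt1 : theta < 1).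

Lemma hat21_le1 (x y : R * R) :
  x.1 <= y.1 -> x.2 <= y.2 -> (hat21 x).1 <= (hat21 y).1.
Proof.
move=> le1 le2 /=; rewrite lerD // ler_wpM2l // subr_ge0; exact: ltW.
Qed.

Lemma hat21_inj : injective hat21.
Proof.
case=> [x1 x2] [y1 y2] [/= + e2]; rewrite e2 => e1; congr pair.
have : (1 - theta) * (x1 - y1) = 0 by lra.
by move/eqP; rewrite mulf_eq0 subr_eq0 gt_eqF ?subr_gt0 //= subr_eq0 => /eqP.
Qed.

Lemma pareto_le_hat21 (x y : R * R) :
  pareto_le x y -> pareto_le (hat21 x) (hat21 y).
Proof.
case=> ne [le1 le2]; split; first by apply: contra_not ne; apply: hat21_inj.
by split=> //; apply: hat21_le1.
Qed.

Lemma pareto_le_of_hat21 (x y : R * R) :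
  x.2 = y.2 -> pareto_le (hat21 x) (hat21 y) -> pareto_le x y.
Proof.
case: x y => [x1 x2] [y1 y2] /= e2 [ne [/= le1 _]]; rewrite e2 in ne le1 *.
split; first by apply: contra_not ne => ->.
by rewrite lerD2l ler_pM2l ?subr_gt0 in le1.
Qed.

End Pareto.

Section Line.
Variables (R : realFieldType) (a k theta : R).

Definition on_line (y : R * R) : Prop := y.2 = a - k * y.1.

Lemma hat21_on_line (x y : R * R) : on_line x -> on_line y ->
  (hat21 theta x).1 - (hat21 theta y).1 = (x.1 - y.1) * (1 - theta * (k + 1)).
Proof. by rewrite /on_line /= => -> ->; ring. Qed.

Hypothesis k_gt0 : 0 < k.

Lemma on_line_inj2 (x y : R * R) : on_line x -> on_line y -> x.2 = y.2 -> x = y.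
Proof.
case: x y => [x1 x2] [y1 y2]; rewrite /on_line /= => -> -> e.
have : k * (x1 - y1) = 0 by lra.
by move/eqP; rewrite mulf_eq0 gt_eqF //= subr_eq0 => /eqP ->.
Qed.

Lemma on_line_lt2 (x y : R * R) : on_line x -> on_line y -> x.2 < y.2 -> y.1 < x.1.
Proof. by rewrite /on_line => -> ->; rewrite ltrD2l ltrN2 ltr_pM2l. Qed.

Lemma on_line_le2 (x y : R * R) : on_line x -> on_line y -> x.2 <= y.2 -> y.1 <= x.1.
Proof. by rewrite /on_line => -> ->; rewrite lerD2l lerN2 ler_pM2l. Qed.

Lemma on_line_pareto_le_hat21 (x y : R * R) : 1 <= theta * (k + 1) ->
  on_line x -> on_line y -> x.2 < y.2 -> pareto_le (hat21 theta x) (hat21 theta y).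
Proof.
move=> theta_k_ge1 lx ly lt2; split; first by case=> _ e2; move: lt2; rewrite e2 ltxx.
split; last exact: ltW.
by rewrite -subr_le0 hat21_on_line // pmulr_rle0 ?subr_gt0 ?(on_line_lt2 lx ly) ?subr_le0.
Qed.

Lemma on_line_hat21_le_eq (x y : R * R) : theta * (k + 1) < 1 ->
  on_line x -> on_line y -> (hat21 theta x).1 <= (hat21 theta y).1 -> x.2 <= y.2 ->
  x = y.
Proof.
move=> theta_k_lt1 lx ly le1 le2; apply: on_line_inj2 => //.
have ge1 := on_line_le2 lx ly le2.
have : (x.1 - y.1) * (1 - theta * (k + 1)) <= 0 by rewrite -hat21_on_line // subr_le0.
rewrite pmulr_lle0 ?subr_gt0 // subr_le0 => le1'.
have e1 : x.1 = y.1 by apply/eqP; rewrite eq_le le1' ge1.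
by rewrite lx ly e1.
Qed.

End Line.

Lemma iter_ordS n (x : 'I_n) m : val (iter m (@ordS n) x) = ((x + m) %% n)%N.
Proof.
elim: m => [|m IH] /=; first by rewrite addn0 modn_small.
by rewrite IH addnS -addn1 modnDml addn1.
Qed.

Lemma exists_tour n : (0 < n)%N -> exists s : {perm 'I_n}, is_tour s.
Proof.
move=> n_gt0; exists (perm (@ordS_inj n)) => x; apply/setP => y; rewrite inE.
apply/porbitP; exists (y + (n - x))%N; apply: val_inj.
have -> : (perm (@ordS_inj n) ^+ (y + (n - x)))%g x = iter (y + (n - x)) (@ordS n) x.
  by rewrite permX; elim: (y + (n - x))%N => //= m ->; rewrite permE.
rewrite iter_ordS addnC -addnA subnK; last exact: ltnW.
by rewrite -modnDmr modnn addn0 modn_small.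
Qed.

Definition is_tourb n (s : {perm 'I_n}) : bool := [forall x, porbit s x == setT].

Lemma is_tourP n (s : {perm 'I_n}) : reflect (is_tour s) (is_tourb s).
Proof. by apply: (iffP forallP) => H x; apply/eqP. Qed.

Section Tours.
Variables (R : realFieldType) (n : nat) (d1 d2 : 'I_n -> 'I_n -> R).
Local Notation D := (Dvec d1 d2).

Lemma exists_pareto_below s : is_tour s -> exists s',
  [/\ is_tour s', pareto_set d1 d2 (D s'), (D s').1 <= (D s).1 & (D s').2 <= (D s).2].
Proof.
move=> /is_tourP ts.
pose below := [pred t : {perm 'I_n} | [&& is_tourb t,
                                          (D t).1 <= (D s).1 & (D t).2 <= (D s).2]].
have below_s : below s by rewrite /= ts !lexx.
case: (arg_minP (fun t => (D t).1 + (D t).2) below_s) => t.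
move=> /and3P[/is_tourP tt le1 le2] t_min.
exists t; split=> //; split; first by exists t.
case=> _ [[u [tu <-]] lt_ut]; have [_ [le1' le2']] := lt_ut.
have below_u : below u.
  by rewrite /= (le_trans le1') ?(le_trans le2') // !andbT; apply/is_tourP.
by move: (t_min u below_u); rewrite leNgt pareto_le_sum_lt.
Qed.

Lemma reduced_pareto21_sub theta y : 0 <= theta -> theta < 1 ->
  reduced_pareto21 d1 d2 theta y -> pareto_set d1 d2 y.
Proof.
move=> theta_ge0 theta_lt1 [s [[ts s_opt] <-]]; split; first by exists s.
case=> _ [[u [tu <-]] lt_us]; apply: s_opt; exists u; split=> //.
by rewrite !Dhat21E; apply: pareto_le_hat21.
Qed.

Variables (a k theta : R).
Hypotheses (k_gt0 : 0 < k) (theta_ge0 : 0 <= theta) (theta_lt1 : theta < 1).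
Hypothesis pareto_on_line : forall y, pareto_set d1 d2 y -> on_line a k y.

Lemma reduced_pareto21_singleton : (0 < n)%N -> 1 <= theta * (k + 1) ->
  exists y0, forall y, reduced_pareto21 d1 d2 theta y <-> y = y0.
Proof.
move=> n_gt0 theta_k_ge1; have [s0 /is_tourP ts0] := exists_tour n_gt0.
case: (arg_minP (fun t => (D t).2) (ts0 : is_tourb s0)) => smin.
move=> /is_tourP tsmin smin_min.
have [s2 [ts2 Ps2 _ le2]] := exists_pareto_below tsmin.
have s2_min t : is_tour t -> (D s2).2 <= (D t).2.
  by move=> /is_tourP tt; apply: le_trans le2 (smin_min t tt).
exists (D s2) => y; split.
- move=> red_y.
  have /pareto_on_line := reduced_pareto21_sub theta_ge0 theta_lt1 red_y.
  case: red_y => s [[ts s_opt] <-] ls.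
  apply: (on_line_inj2 k_gt0 ls (pareto_on_line Ps2)).
  apply/eqP; rewrite eq_le s2_min // andbT leNgt; apply/negP => lt2.
  apply: s_opt; exists s2; split=> //; rewrite !Dhat21E.
  exact: on_line_pareto_le_hat21 (pareto_on_line Ps2) ls lt2.
- move=> ->; exists s2; split=> //; split=> // -[t [tt]].
  rewrite !Dhat21E => lt_ts.
  have e2 : (D t).2 = (D s2).2.
    by apply/eqP; rewrite eq_le s2_min // andbT; case: lt_ts => _ [].
  case: Ps2 => _; apply; exists (D t); split; first by exists t.
  exact: pareto_le_of_hat21 lt_ts.
Qed.

Lemma reduced_pareto21_eq_pareto : theta * (k + 1) < 1 ->
  forall y, reduced_pareto21 d1 d2 theta y <-> pareto_set d1 d2 y.
Proof.
move=> theta_k_lt1 y; split; first exact: reduced_pareto21_sub.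
move=> Py; have [[s [ts Dsy]] _] := Py.
exists s; split=> //; split=> // -[t [tt]]; rewrite !Dhat21E Dsy => lt_ty.
have [u [tu Pu le1 le2]] := exists_pareto_below tt.
have [_ [le1' le2']] := lt_ty.
have hat_le1 : (hat21 theta (D u)).1 <= (hat21 theta (D t)).1 by apply: hat21_le1.
have Duy : D u = y := on_line_hat21_le_eq k_gt0 theta_k_lt1 (pareto_on_line Pu)
  (pareto_on_line Py) (le_trans hat_le1 le1') (le_trans le2 le2').
by move: (pareto_le_sum_lt lt_ty); rewrite -Duy; lra.
Qed.

End Tours.

Theorem theorem3 (R : realFieldType) (n : nat) (hn : (2 <= n)%N)
  (d1 d2 : 'I_n -> 'I_n -> R)
  (hd1 : forall i j : 'I_n, i != j -> 0 < d1 i j)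
  (hd2 : forall i j : 'I_n, i != j -> 0 < d2 i j)
  (a k : R) (ha : 0 < a) (hk : 0 < k)
  (hP : forall y : R * R, pareto_set d1 d2 y <->
          (y.2 = a - k * y.1 /\ outcomes1 d1 d2 y.1 /\ outcomes2 d1 d2 y.2))
  (theta : R) (htheta0 : 0 < theta) (htheta1 : theta < 1) :
  (1 / (k + 1) <= theta ->
     exists y0 : R * R, forall y, reduced_pareto21 d1 d2 theta y <-> y = y0) /\
  (theta < 1 / (k + 1) ->
     forall y, reduced_pareto21 d1 d2 theta y <-> pareto_set d1 d2 y).
Proof.
have k1_gt0 : 0 < k + 1 by rewrite addr_gt0.
have pareto_on_line y : pareto_set d1 d2 y -> on_line a k y by case/hP.
have theta_ge0 := ltW htheta0.
split=> theta_k.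
- apply: (reduced_pareto21_singleton hk theta_ge0 htheta1 pareto_on_line).
    exact: ltnW.
  by rewrite -ler_pdivrMr.
- apply: (reduced_pareto21_eq_pareto hk theta_ge0 htheta1 pareto_on_line).
  by rewrite -ltr_pdivlMr.
Qed.
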